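(* Every formula occurring in a tree-like $\mathrm{LM}_{\rightarrow}$ deduction $\partial$ of a sequent $S$ is a semi-subformula of a formula occurring in $S$. In particular, if $S$ is $\Rightarrow\rho$, then every formula $\alpha$ occurring in $\partial$ is a semi-subformula of $\rho$, hence $|\alpha|\le|\rho|$, and thus $\mu(\partial)\le|\rho|$.
   Context: Formulas of $\mathcal{L}_{\rightarrow}$ are built from propositional variables using only $\rightarrow$; $|\alpha|$ is the number of occurrences of $\rightarrow$ in $\alpha$. The semi-subformulas of $\rho$ form the least set containing $\rho$ such that whenever $\alpha\rightarrow\beta$ is in it, so are $\alpha$ and $\beta$, and whenever $(\alpha\rightarrow\beta)\rightarrow\gamma$ is in it, so is $\beta\rightarrow\gamma$. Sequents are $\Gamma\Rightarrow\alpha$ with $\Gamma$ a finite multiset. $\mathrm{LM}_{\rightarrow}$ has axioms $\Gamma,p\Rightarrow p$ ($p$ a variable) and rules: from $\Gamma,\alpha\Rightarrow\beta$ infer $\Gamma\Rightarrow\alpha\rightarrow\beta$ provided $\Gamma$ contains no $(\alpha\rightarrow\beta)\rightarrow\gamma$; from $\Gamma,\alpha,\beta\rightarrow\gamma\Rightarrow\beta$ infer $\Gamma,(\alpha\rightarrow\beta)\rightarrow\gamma\Rightarrow\alpha\rightarrow\beta$; from $\Gamma,p,\gamma\Rightarrow q$ infer $\Gamma,p,p\rightarrow\gamma\Rightarrow q$ ($p\neq q$ variables, $q$ occurring in $\Gamma$ or $\gamma$); from $\Gamma,\alpha,\beta\rightarrow\gamma\Rightarrow\beta$ and $\Gamma,\gamma\Rightarrow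 q$ infer $\Gamma,(\alpha\rightarrow\beta)\rightarrow\gamma\Rightarrow q$ ($q$ a variable occurring in $\Gamma$ or $\gamma$). $\mu(\partial)$ is the maximum of $|\alpha|$ over formulas $\alpha$ occurring in $\partial$. *)

(* Implicational formulas, semi-subformulas, and tree-like
   LM-> deductions. Antecedents are multisets, represented as lists taken
   up to permutation. *)
From Stdlib Require Import List Permutation Arith.
Import ListNotations.

Inductive formula : Type :=
| Var : nat -> formula
| Imp : formula -> formula -> formula.

Fixpoint fsize (a : formula) : nat :=
  match a with
  | Var _ => 0
  | Imp a b => S (fsize a + fsize b)
  end.

Fixpoint var_occ (q : nat) (a : formula) : Prop :=
  match a with
  | Var p => p = q
  | Imp a b => var_occ q a \/ var_occ q b
  end.

Definition var_occ_ctx (q : nat) (G : list formula) : Prop :=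
  exists a, In a G /\ var_occ q a.

Inductive semisub (r : formula) : formula -> Prop :=
| ss_refl : semisub r r
| ss_left : forall a b, semisub r (Imp a b) -> semisub r a
| ss_right : forall a b, semisub r (Imp a b) -> semisub r b
| ss_semi : forall a b g, semisub r (Imp (Imp a b) g) -> semisub r (Imp b g).

Inductive deriv : list formula -> formula -> Type :=
| d_ax : forall (D G : list formula) (p : nat),
    Permutation D (Var p :: G) ->
    deriv D (Var p)
| d_impR : forall (D D1 G : list formula) (a b : formula),
    Permutation D G ->
    Permutation D1 (a :: G) ->
    (forall g, ~ In (Imp (Imp a b) g) G) ->
    deriv D1 b ->
    deriv D (Imp a b)
| d_impimpR : forall (D D1 G : list formula) (a b g : formula),
    Permutation D (Imp (Imp a b) g :: G) ->
    Permutation D1 (a :: Imp b g :: G) ->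
    deriv D1 b ->
    deriv D (Imp a b)
| d_varL : forall (D D1 G : list formula) (p q : nat) (g : formula),
    p <> q ->
    (var_occ_ctx q G \/ var_occ q g) ->
    Permutation D (Var p :: Imp (Var p) g :: G) ->
    Permutation D1 (Var p :: g :: G) ->
    deriv D1 (Var q) ->
    deriv D (Var q)
| d_impimpL : forall (D D1 D2 G : list formula) (a b g : formula) (q : nat),
    (var_occ_ctx q G \/ var_occ q g) ->
    Permutation D (Imp (Imp a b) g :: G) ->
    Permutation D1 (a :: Imp b g :: G) ->
    Permutation D2 (g :: G) ->
    deriv D1 b ->
    deriv D2 (Var q) ->
    deriv D (Var q).

Fixpoint dformulas {D c} (d : deriv D c) : list formula :=
  match d with
  | d_ax D _ _ _ => c :: D
  | d_impR D _ _ _ _ _ _ _ d1 => c :: D ++ dformulas d1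
  | d_impimpR D _ _ _ _ _ _ _ d1 => c :: D ++ dformulas d1
  | d_varL D _ _ _ _ _ _ _ _ _ d1 => c :: D ++ dformulas d1
  | d_impimpL D _ _ _ _ _ _ _ _ _ _ _ d1 d2 =>
      c :: D ++ dformulas d1 ++ dformulas d2
  end.

Definition occurs_in {D c} (a : formula) (d : deriv D c) : Prop :=
  In a (dformulas d).

Definition mu {D c} (d : deriv D c) : nat :=
  fold_right Nat.max 0 (map fsize (dformulas d)).

From Stdlib Require Import List Permutation Arith Lia.
Import ListNotations.

(* Read bottom-up, each LM-> rule only builds its premises out of semi-subformulas
   of formulas of its conclusion: the new formulas are a, b, g and b -> g,
   taken from a -> b, p -> g and (a -> b) -> g. So by induction on the
   deduction, every formula in it is a semi-subformula of a formula of the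
   end-sequent. Semi-subformulas never have more arrows, which bounds mu. *)

Lemma semisub_trans r a b : semisub r a -> semisub a b -> semisub r b.
Proof.
  intros Hra Hab. induction Hab.
  - exact Hra.
  - eapply ss_left; eauto.
  - eapply ss_right; eauto.
  - eapply ss_semi; eauto.
Qed.

Lemma semisub_fsize r a : semisub r a -> fsize a <= fsize r.
Proof. intros H. induction H; simpl in *; lia. Qed.

Definition semisub_list (L : list formula) (a : formula) : Prop :=
  exists r, In r L /\ semisub r a.

Definition semisub_incl (L1 L : list formula) : Prop :=
  forall a, In a L1 -> semisub_list L a.

Lemma semisub_list_in L r a : In r L -> semisub r a -> semisub_list L a.
Proof. intros Hr Hra. exists r. split; assumption. Qed.

Lemma incl_semisub_incl L1 L : incl L1 L -> semisub_incl L1 L.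
Proof. intros H a Ha. apply semisub_list_in with a; [apply H, Ha | apply ss_refl]. Qed.

Lemma semisub_incl_cons a L1 L :
  semisub_list L a -> semisub_incl L1 L -> semisub_incl (a :: L1) L.
Proof. intros Ha H1 x [<- | Hx]; auto. Qed.

Lemma semisub_incl_app L1 L2 L :
  semisub_incl L1 L -> semisub_incl L2 L -> semisub_incl (L1 ++ L2) L.
Proof. intros H1 H2 x Hx. apply in_app_or in Hx. destruct Hx; auto. Qed.

Lemma semisub_incl_trans L1 L2 L3 :
  semisub_incl L1 L2 -> semisub_incl L2 L3 -> semisub_incl L1 L3.
Proof.
  intros H12 H23 a Ha.
  destruct (H12 a Ha) as [r [Hr Hra]].
  destruct (H23 r Hr) as [s [Hs Hsr]].
  exact (semisub_list_in _ _ _ Hs (semisub_trans _ _ _ Hsr Hra)).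
Qed.

Lemma semisub_incl_perm L1 L1' L L' :
  Permutation L1 L1' -> Permutation L L' -> semisub_incl L1 L -> semisub_incl L1' L'.
Proof.
  intros HL1 HL H.
  apply semisub_incl_trans with L1; [apply incl_semisub_incl; intros x Hx |].
  - exact (Permutation_in _ (Permutation_sym HL1) Hx).
  - apply semisub_incl_trans with L; [exact H |].
    apply incl_semisub_incl. intros x Hx. exact (Permutation_in _ HL Hx).
Qed.

Lemma semisub_incl_conclusion c D L :
  semisub_incl L (c :: D) -> semisub_incl (c :: D ++ L) (c :: D).
Proof.
  intros H. apply (semisub_incl_app (c :: D)); [apply incl_semisub_incl, incl_refl | exact H].
Qed.

Lemma impR_premise D D1 G a b :
  Permutation D G -> Permutation D1 (a :: G) ->
  semisub_incl (b :: D1) (Imp a b :: D).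
Proof.
  intros HD HD1.
  apply (semisub_incl_perm (b :: a :: G) _ (Imp a b :: G));
    [apply perm_skip, Permutation_sym, HD1 | apply perm_skip, Permutation_sym, HD |].
  apply semisub_incl_cons; [apply semisub_list_in with (Imp a b); [left; reflexivity | eapply ss_right, ss_refl] |].
  apply semisub_incl_cons; [apply semisub_list_in with (Imp a b); [left; reflexivity | eapply ss_left, ss_refl] |].
  apply incl_semisub_incl, incl_tl, incl_refl.
Qed.

Lemma impimp_left_premise c D D1 G a b g :
  Permutation D (Imp (Imp a b) g :: G) -> Permutation D1 (a :: Imp b g :: G) ->
  semisub_incl (b :: D1) (c :: D).
Proof.
  intros HD HD1.
  apply (semisub_incl_perm (b :: a :: Imp b g :: G) _ (c :: Imp (Imp a b) g :: G));
    [apply perm_skip, Permutation_sym, HD1 | apply perm_skip, Permutation_sym, HD |].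
  assert (Hin : In (Imp (Imp a b) g) (c :: Imp (Imp a b) g :: G)) by (right; left; reflexivity).
  apply semisub_incl_cons; [apply semisub_list_in with (1 := Hin); eapply ss_right, ss_left, ss_refl |].
  apply semisub_incl_cons; [apply semisub_list_in with (1 := Hin); eapply ss_left, ss_left, ss_refl |].
  apply semisub_incl_cons; [apply semisub_list_in with (1 := Hin); eapply ss_semi, ss_refl |].
  apply incl_semisub_incl, incl_tl, incl_tl, incl_refl.
Qed.

Lemma varL_premise D D1 G p q g :
  Permutation D (Var p :: Imp (Var p) g :: G) -> Permutation D1 (Var p :: g :: G) ->
  semisub_incl (Var q :: D1) (Var q :: D).
Proof.
  intros HD HD1.
  apply (semisub_incl_perm (Var q :: Var p :: g :: G) _ (Var q :: Var p :: Imp (Var p) g :: G));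
    [apply perm_skip, Permutation_sym, HD1 | apply perm_skip, Permutation_sym, HD |].
  apply semisub_incl_cons; [apply semisub_list_in with (Var q); [left; reflexivity | apply ss_refl] |].
  apply semisub_incl_cons; [apply semisub_list_in with (Var p); [right; left; reflexivity | apply ss_refl] |].
  apply semisub_incl_cons;
    [apply semisub_list_in with (Imp (Var p) g); [right; right; left; reflexivity | eapply ss_right, ss_refl] |].
  apply incl_semisub_incl, incl_tl, incl_tl, incl_tl, incl_refl.
Qed.

Lemma impimpL_right_premise D D2 G a b g q :
  Permutation D (Imp (Imp a b) g :: G) -> Permutation D2 (g :: G) ->
  semisub_incl (Var q :: D2) (Var q :: D).
Proof.
  intros HD HD2.
  apply (semisub_incl_perm (Var q :: g :: G) _ (Var q :: Imp (Imp a b) g :: G));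
    [apply perm_skip, Permutation_sym, HD2 | apply perm_skip, Permutation_sym, HD |].
  apply semisub_incl_cons; [apply semisub_list_in with (Var q); [left; reflexivity | apply ss_refl] |].
  apply semisub_incl_cons;
    [apply semisub_list_in with (Imp (Imp a b) g); [right; left; reflexivity | eapply ss_right, ss_refl] |].
  apply incl_semisub_incl, incl_tl, incl_tl, incl_refl.
Qed.

Lemma dformulas_semisub D c (d : deriv D c) : semisub_incl (dformulas d) (c :: D).
Proof.
  induction d; cbn [dformulas].
  - apply incl_semisub_incl, incl_refl.
  - apply semisub_incl_conclusion, (semisub_incl_trans _ _ _ IHd).
    exact (impR_premise _ _ _ _ _ p p0).
  - apply semisub_incl_conclusion, (semisub_incl_trans _ _ _ IHd).
    exact (impimp_left_premise _ _ _ _ _ _ _ p p0).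
  - apply semisub_incl_conclusion, (semisub_incl_trans _ _ _ IHd).
    exact (varL_premise _ _ _ _ _ _ p0 p1).
  - apply semisub_incl_conclusion, semisub_incl_app.
    + apply (semisub_incl_trans _ _ _ IHd1). exact (impimp_left_premise _ _ _ _ _ _ _ p p0).
    + apply (semisub_incl_trans _ _ _ IHd2). exact (impimpL_right_premise _ _ _ _ _ _ _ p p1).
Qed.

Theorem lemma2 :
  (forall (D : list formula) (c : formula) (d : deriv D c) (a : formula),
      occurs_in a d -> exists b, (In b D \/ b = c) /\ semisub b a)
  /\
  (forall (r : formula) (d : deriv [] r),
      (forall a, occurs_in a d -> semisub r a /\ fsize a <= fsize r)
      /\ mu d <= fsize r).
Proof.
  assert (Hocc : forall D c (d : deriv D c) a,
             occurs_in a d -> exists b, (In b D \/ b = c) /\ semisub b a).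
  { intros D c d a Ha.
    destruct (dformulas_semisub D c d a Ha) as [b [[<- | Hb] Hba]]; eauto. }
  split; [exact Hocc |].
  intros r d.
  assert (Hr : forall a, occurs_in a d -> semisub r a /\ fsize a <= fsize r).
  { intros a Ha.
    destruct (Hocc _ _ d a Ha) as [b [[[] | ->] Hba]].
    split; [exact Hba | exact (semisub_fsize _ _ Hba)]. }
  split; [exact Hr |].
  apply list_max_le, Forall_map, Forall_forall. intros a Ha. apply Hr, Ha.
Qed.
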